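(* Let $r$ be a positive integer, $A=A_r$, and let $M$ be the $\aleph_1$-separable group (right $A$-module) constructed as in the context, with $A$ regarded as a subring of $\operatorname{End}(M)$ via its action on $M$. If $A$ is algebraically closed in $\operatorname{End}(M)$, then for any positive integers $m$ and $k$, $M^m$ is isomorphic to $M^k$ if and only if $m\equiv k\pmod r$.
   Context: $A=A_r$ is the ring freely generated by $\rho_i,\sigma_i$ ($i=0,\dots,r$) subject to $\rho_j\sigma_i=\delta_{ij}$ and $\sum_{i=0}^r\sigma_i\rho_i=1$; it is free as an abelian group. Let $G$ be Corner's countable torsion-free abelian group: a right $A$-module whose endomorphism ring is $A$ (acting by right multiplication), with $\operatorname{Hom}(G,\mathbf{Z})=0$ and $G^\ell\not\cong G^n$ for $1\le\ell<n\le r$. Let $B\subseteq H$ be countable free right $A$-modules with $H/B\cong G$, $B=\bigcup_{n\in\omega}B_n$ an increasing chain with $B_0=0$ and $H/B_n$, $B_{n+1}/B_n$ free of rank $\omega$ for all $n$. Fix for each $n$ elements $b_{n,i}\in B_{n+1}$ ($i\in\omega$) such that $\{b_{n,i}+B_n\}$ is an $A$-basis of $B_{n+1}/B_n$ (so $\{b_{n,i}\}$ is a basis of $B$). Fix a stationary set $E\subseteq\omega_1$ of limit ordinals and a tree-like ladder system $\{\eta_\delta:\delta\in E\}$: each $\eta_\delta:\omega\to\delta$ is strictly increasing with range cofinal in $\delta$ and disjoint from $E$, and $\eta_\delta(n)=\eta_\gamma(m)$ implies $m=n$ and $\eta_\delta(l)=\eta_\gamma(l)$ for all $l<n$. Define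 right $A$-modules $M_\beta$ ($\beta<\omega_1$) inductively: $M_0=0$; $M_\beta=\bigcup_{\alpha<\beta}M_\alpha$ for limit $\beta$; if $\alpha\notin E$, $M_{\alpha+1}=M_\alpha\oplus\bigoplus_{i\in\omega}x_{\alpha,i}A$ with new free generators $x_{\alpha,i}$; if $\delta\in E$, let $\iota_\delta:B\to M_\delta$ be the $A$-linear map with $b_{n,i}\mapsto x_{\eta_\delta(n),i}$ and let $M_{\delta+1}$ be the pushout of $\iota_\delta$ and the inclusion $B\hookrightarrow H$ (so $M_\delta\subseteq M_{\delta+1}$, there is an embedding $\theta_\delta:H\to M_{\delta+1}$ extending $\iota_\delta$, and $M_{\delta+1}/M_\delta\cong H/B$). Put $M=\bigcup_{\beta<\omega_1}M_\beta$. An abelian group is $\aleph_1$-separable if every countable subset lies in a countable free direct summand. $M^m$ is the direct sum of $m$ copies of $M$. A subring $A$ of a ring $R$ is algebraically closed in $R$ if every finite system of ring equations (polynomials in several noncommuting variables with coefficients from $A$) that has a solution in $R$ has a solution in $A$. *)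

From HB Require Import structures.
From mathcomp Require Import all_boot all_order all_algebra.
From Stdlib Require Lists.List.
Set Implicit Arguments. Unset Strict Implicit. Unset Printing Implicit Defensive.
Import Order.TTheory GRing.Theory.
Local Open Scope ring_scope.

(* The ring A_r: freely generated by rho_i, sigma_i (i = 0..r) subject *)
(* to rho_j sigma_i = delta_ij and sum_i sigma_i rho_i = 1, expressed   *)
(* by its universal property.                                          *)
Definition Ar_relations (S : nzRingType) (r : nat) (rho sigma : 'I_r.+1 -> S) :=
  (forall i j : 'I_r.+1, rho j * sigma i = (i == j)%:R) /\
  \sum_(i < r.+1) sigma i * rho i = 1.

Definition is_Ar (A : nzRingType) (r : nat) (rho sigma : 'I_r.+1 -> A) :=
  Ar_relations rho sigma /\
  forall (S : nzRingType) (rho' sigma' : 'I_r.+1 -> S),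
    Ar_relations rho' sigma' ->
    (exists f : {rmorphism A -> S},
        forall i, f (rho i) = rho' i /\ f (sigma i) = sigma' i) /\
    (forall f g : {rmorphism A -> S},
        (forall i, f (rho i) = g (rho i) /\ f (sigma i) = g (sigma i)) ->
        forall a, f a = g a).

(* Generalities. Right A-modules are left A^c-modules: the right       *)
(* product m.a is written  a *: m.                                     *)
Definition countable_type (T : Type) := exists f : T -> nat, injective f.

Definition additive_map (U V : zmodType) (f : U -> V) :=
  forall x y, f (x + y) = f x + f y.

Definition group_iso (U V : zmodType) :=
  exists f : U -> V, additive_map f /\ bijective f.

Definition power (V : zmodType) (n : nat) : zmodType := {ffun 'I_n -> V}.

Section Modules.
Variable A : nzRingType.

Definition Alinear (U V : lmodType A^c) (f : U -> V) :=
  additive_map f /\ forall (a : A^c) u, f (a *: u) = a *: f u.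

Definition submod (V : lmodType A^c) (P : V -> Prop) :=
  P 0 /\ (forall x y, P x -> P y -> P (x + y)) /\
  (forall (a : A^c) x, P x -> P (a *: x)).

(* v is an A-basis of the quotient P/Q  (Q a submodule of P);
   in particular  P/Q  is free of rank omega *)
Definition qbasis (V : lmodType A^c) (P Q : V -> Prop) (v : nat -> V) :=
  (forall i, P (v i)) /\
  (forall y, P y -> exists (N : nat) (c : nat -> A^c),
                     Q (y - \sum_(i < N) c i *: v i)) /\
  (forall (N : nat) (c : nat -> A^c),
     Q (\sum_(i < N) c i *: v i) -> forall i, (i < N)%N -> c i = 0).

Definition zero_sub (V : lmodType A^c) : V -> Prop := fun v => v = 0.
End Modules.

Definition corner_group (A : nzRingType) (r : nat) (G : lmodType A^c) :=
  countable_type G /\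
  (forall (g : G) n, g *+ n.+1 = 0 -> g = 0) /\
  (* End(G) = A acting by right multiplication *)
  (forall f : G -> G, additive_map f ->
     exists a : A^c, (forall g, f g = a *: g) /\
       forall b : A^c, (forall g, f g = b *: g) -> b = a) /\
  (forall f : G -> int, additive_map f -> forall g, f g = 0) /\
  (forall l n, (1 <= l)%N -> (l < n)%N -> (n <= r)%N ->
     ~ group_iso (power G l) (power G n)).

(* omega_1 : any well-ordered uncountable type whose proper initial    *)
(* segments are countable (all such are isomorphic to omega_1).       *)
Section Omega1.
Context {d : Order.disp_t} {O : orderType d}.
Local Open Scope order_scope.

Definition is_omega1 :=
  well_founded (fun a b : O => a < b) /\
  ~ countable_type O /\
  forall a : O, exists f : O -> nat,
      forall b c, b < a -> c < a -> f b = f c -> b = c.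

Definition is_zero_ord (a : O) := forall b, a <= b.
Definition succ_of (a b : O) := a < b /\ forall c, a < c -> b <= c.
Definition limit_ord (a : O) :=
  (exists b, b < a) /\ forall b, b < a -> exists c, b < c /\ c < a.

Definition club (C : O -> Prop) :=
  (forall a, exists b, a < b /\ C b) /\
  (forall a, limit_ord a ->
     (forall b, b < a -> exists c, b < c /\ c < a /\ C c) -> C a).

Definition stationary (E : O -> Prop) :=
  forall C, club C -> exists a, C a /\ E a.

Definition tree_ladder (E : O -> Prop) (eta : O -> nat -> O) :=
  forall a, E a ->
    (forall n m, (n < m)%N -> eta a n < eta a m) /\
    (forall n, eta a n < a) /\
    (forall b, b < a -> exists n, b <= eta a n) /\
    (forall n, ~ E (eta a n)) /\
    (forall c n m, E c -> eta a n = eta c m ->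
       m = n /\ forall l, (l < n)%N -> eta a l = eta c l).
End Omega1.

Definition BH_data (A : nzRingType) (G H : lmodType A^c)
  (B : H -> Prop) (Bn : nat -> H -> Prop) (b : nat -> nat -> H) :=
  countable_type H /\
  submod B /\
  (exists w : nat -> H, qbasis B (@zero_sub _ H) w) /\   (* B free *)
  (exists w : nat -> H, qbasis (fun _ => True) (@zero_sub _ H) w) /\ (* H free *)
  (exists q : H -> G, Alinear q /\ (forall g, exists h, q h = g) /\
                      forall h, q h = 0 <-> B h) /\
  (forall n, submod (Bn n)) /\
  (forall n h, Bn n h -> Bn n.+1 h) /\
  (forall h, B h <-> exists n, Bn n h) /\
  (forall h, Bn 0%N h <-> h = 0) /\
  (forall n, exists v : nat -> H, qbasis (fun _ => True) (Bn n) v) /\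
  (forall n, qbasis (Bn n.+1) (Bn n) (b n)).

(* The transfinite construction of M, characterized (up to isomorphism)
   by a filtration M_beta, the free generators x_{alpha,i}, and the
   embeddings theta_delta : H -> M_{delta+1}, where M_{delta+1} is the
   pushout of iota_delta and B -> H. *)
Definition M_construction (A : nzRingType) {d : Order.disp_t} {O : orderType d}
  (H : lmodType A^c) (B : H -> Prop) (b : nat -> nat -> H)
  (E : O -> Prop) (eta : O -> nat -> O)
  (M : lmodType A^c) (Mb : O -> M -> Prop) (x : O -> nat -> M)
  (theta : O -> H -> M) :=
  (forall a, submod (Mb a)) /\
  (forall a c m, (a <= c)%O -> Mb a m -> Mb c m) /\
  (forall a, is_zero_ord a -> forall m, Mb a m <-> m = 0) /\
  (forall a, limit_ord a -> forall m, Mb a m <-> exists c, (c < a)%O /\ Mb c m) /\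
  (forall a c, succ_of a c -> ~ E a -> qbasis (Mb c) (Mb a) (x a)) /\
  (forall a c, succ_of a c -> E a ->
     Alinear (theta a) /\
     (forall n i, theta a (b n i) = x (eta a n) i) /\
     (forall h, Mb c (theta a h)) /\
     (forall m, Mb c m -> exists m0 h, Mb a m0 /\ m = m0 + theta a h) /\
     (forall m0 h, Mb a m0 -> m0 + theta a h = 0 -> B h)) /\
  (forall m, exists a, Mb a m).

(* Algebraic closedness of A in End(M).  End(M) is the ring of additive *)
(* endomorphisms, with endomorphisms acting on the right (product f.g =  *)
(* first f then g), so that a |-> (m |-> m.a) is a ring embedding.       *)
Inductive term (A : Type) :=
| TVar of nat
| TConst of A
| TAdd of term A & term A
| TNeg of term A
| TMul of term A & term A.

Arguments TVar {A}.

Fixpoint evalA (A : nzRingType) (s : nat -> A) (t : term A) : A :=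
  match t with
  | TVar n => s n
  | TConst a => a
  | TAdd t1 t2 => evalA s t1 + evalA s t2
  | TNeg t1 => - evalA s t1
  | TMul t1 t2 => evalA s t1 * evalA s t2
  end.

Fixpoint evalEnd (A : nzRingType) (M : lmodType A^c) (s : nat -> M -> M)
    (t : term A) : M -> M :=
  match t with
  | TVar n => s n
  | TConst a => fun m => (a : A^c) *: m
  | TAdd t1 t2 => fun m => evalEnd s t1 m + evalEnd s t2 m
  | TNeg t1 => fun m => - evalEnd s t1 m
  | TMul t1 t2 => fun m => evalEnd s t2 (evalEnd s t1 m)
  end.

Definition alg_closed_in_End (A : nzRingType) (M : lmodType A^c) :=
  forall sys : seq (term A),
    (exists s : nat -> M -> M, (forall n, additive_map (s n)) /\
        forall t, Stdlib.Lists.List.In t sys -> forall m, evalEnd s t m = 0) ->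
    exists s : nat -> A, forall t, Stdlib.Lists.List.In t sys -> evalA s t = 0.

From HB Require Import structures.
From mathcomp Require Import all_boot all_order all_algebra.
From Stdlib Require List.
Import Order.TTheory GRing.Theory.
Local Open Scope ring_scope.
Set Implicit Arguments. Unset Strict Implicit.

(* The relations of A_r say that the row (sigma_i) and the column (rho_i) are
   mutually inverse matrices, so A ≅ A^(r+1) as right A-modules; hence
   A^m ≅ A^k, and then M^m ≅ M^k, whenever m = k (mod r).  Conversely, an
   isomorphism M^m ≅ M^k is a pair of mutually inverse matrices over End(M),
   i.e. a solution in End(M) of a finite system of ring equations with
   constants 0 and 1.  Algebraic closedness yields a solution in A, so
   A^m ≅ A^k and therefore G^m ≅ G^k; replacing m and k by their
   representatives in 1..r, Corner's property of G makes them equal. *)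

Definition free_iso (R : nzRingType) (m k : nat) :=
  exists (P : 'M[R]_(m, k)) (Q : 'M[R]_(k, m)), P *m Q = 1%:M /\ Q *m P = 1%:M.

Section FreeIso.
Variable R : nzRingType.

Lemma free_iso_refl m : free_iso R m m.
Proof. by exists 1%:M, 1%:M; rewrite mul1mx. Qed.

Lemma free_iso_sym m k : free_iso R m k -> free_iso R k m.
Proof. by case=> P [Q [PQ QP]]; exists Q, P. Qed.

Lemma free_iso_trans m k l : free_iso R m k -> free_iso R k l -> free_iso R m l.
Proof.
case=> P [Q [PQ QP]] [P' [Q' [PQ' QP']]]; exists (P *m P'), (Q' *m Q); split.
  by rewrite mulmxA -(mulmxA P) PQ' mulmx1 PQ.
by rewrite mulmxA -(mulmxA Q') QP mulmx1 QP'.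
Qed.

Lemma free_iso_add m1 k1 m2 k2 :
  free_iso R m1 k1 -> free_iso R m2 k2 -> free_iso R (m1 + m2) (k1 + k2).
Proof.
case=> P [Q [PQ QP]] [P' [Q' [PQ' QP']]].
exists (block_mx P 0 0 P'), (block_mx Q 0 0 Q').
by rewrite !mulmx_block !mulmx0 !mul0mx !addr0 !add0r PQ QP PQ' QP' -!scalar_mx_block.
Qed.

End FreeIso.

Section ArRank.
Variables (A : nzRingType) (r : nat) (rho sigma : 'I_r.+1 -> A).
Hypothesis hA : Ar_relations rho sigma.

Lemma Ar_free_iso_1 : free_iso A 1 r.+1.
Proof.
case: hA => rho_sigma sum_sigma_rho.
exists (\row_i sigma i), (\col_i rho i); split; apply/matrixP=> i j.
  by rewrite !ord1 !mxE -sum_sigma_rho; apply: eq_bigr => l _; rewrite !mxE.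
by rewrite !mxE big_ord1 !mxE rho_sigma eq_sym.
Qed.

Lemma Ar_free_iso_addr m : (0 < m)%N -> free_iso A m (m + r).
Proof.
move=> m_gt0; rewrite -{1 2}(prednK m_gt0) addSnnS -addn1.
exact: free_iso_add (free_iso_refl _ _) Ar_free_iso_1.
Qed.

Lemma Ar_free_iso_addrM m n : (0 < m)%N -> free_iso A m (m + r * n).
Proof.
move=> m_gt0; elim: n => [|n IHn]; first by rewrite muln0 addn0; apply: free_iso_refl.
apply: free_iso_trans IHn _; rewrite mulnSr addnA.
by apply: Ar_free_iso_addr; rewrite ltn_addr.
Qed.

Lemma Ar_free_iso_mod m k :
  (0 < m)%N -> (0 < k)%N -> m = k %[mod r] -> free_iso A m k.
Proof.
wlog le_mk : m k / (m <= k)%N => [W m_gt0 k_gt0 emk|m_gt0 _ emk].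
  have [/W|/ltnW/W W'] := leqP m k; first exact.
  exact/free_iso_sym/W'.
have /dvdnP [n def_n] : (r %| k - m)%N by rewrite -eqn_mod_dvd // emk.
by rewrite -(subnKC le_mk) def_n mulnC; apply: Ar_free_iso_addrM.
Qed.

End ArRank.

Section AdditiveMaps.
Variables (U V : zmodType) (f : U -> V).
Hypothesis f_add : additive_map f.

Lemma additive_map0 : f 0 = 0.
Proof. by apply: (addrI (f 0)); rewrite -f_add !addr0. Qed.

Lemma additive_map_sum I (s : seq I) (F : I -> U) :
  f (\sum_(i <- s) F i) = \sum_(i <- s) f (F i).
Proof.
elim: s => [|i s IHs]; first by rewrite !big_nil additive_map0.
by rewrite !big_cons f_add IHs.
Qed.

Lemma additive_map_inverse g : cancel f g -> cancel g f -> additive_map g.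
Proof. by move=> fK gK u v; apply: (can_inj fK); rewrite f_add !gK. Qed.

End AdditiveMaps.

Section MatrixAction.
Variables (A : nzRingType) (V : lmodType A^c).

Definition mxact m k (P : 'M[A]_(m, k)) (v : power V m) : power V k :=
  [ffun j => \sum_i (P i j : A^c) *: v i].

Lemma mxact_additive m k (P : 'M[A]_(m, k)) : additive_map (mxact P).
Proof.
move=> u v; apply/ffunP => j; rewrite !ffunE -big_split /=.
by apply: eq_bigr => i _; rewrite !ffunE scalerDr.
Qed.

Lemma mxactM m k l (P : 'M[A]_(m, k)) (Q : 'M[A]_(k, l)) v :
  mxact Q (mxact P v) = mxact (P *m Q) v.
Proof.
apply/ffunP => j; rewrite !ffunE.
under eq_bigr do rewrite ffunE scaler_sumr.
rewrite exchange_big /=; apply: eq_bigr => i _.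
by rewrite mxE scaler_suml; apply: eq_bigr => h _; rewrite scalerA.
Qed.

Lemma mxact1 m (v : power V m) : mxact 1%:M v = v.
Proof.
apply/ffunP => j; rewrite ffunE (bigD1 j) //= big1 => [|i /negbTE neq_ij].
  by rewrite mxE eqxx scale1r addr0.
by rewrite mxE neq_ij scale0r.
Qed.

Lemma free_iso_group_iso m k :
  free_iso A m k -> group_iso (power V m) (power V k).
Proof.
case=> P [Q [PQ QP]]; exists (mxact P); split; first exact: mxact_additive.
by exists (mxact Q) => v; rewrite mxactM ?PQ ?QP mxact1.
Qed.

End MatrixAction.

Definition inj_summand (V : zmodType) n (i : 'I_n) (x : V) : power V n :=
  [ffun l => if l == i then x else 0].

Lemma inj_summand_additive (V : zmodType) n (i : 'I_n) :
  additive_map (@inj_summand V n i).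
Proof. by move=> x y; apply/ffunP => l; rewrite !ffunE; case: eqP; rewrite ?addr0. Qed.

Lemma power_decomp (V : zmodType) n (v : power V n) :
  v = \sum_i inj_summand i (v i).
Proof.
apply/ffunP => l; rewrite sum_ffunE (bigD1 l) //= big1 ?ffunE ?eqxx ?addr0 //.
by move=> i /negbTE neq_il; rewrite ffunE eq_sym neq_il.
Qed.

Lemma sum_summands_cancel (V : zmodType) p q (f : power V p -> power V q) g :
  additive_map g -> cancel f g -> forall v, \sum_j g (inj_summand j (f v j)) = v.
Proof. by move=> g_add fK v; rewrite -additive_map_sum // -power_decomp fK. Qed.

Lemma mem_In (T : eqType) (x : T) s : x \in s -> List.In x s.
Proof. by elim: s => //= y s IHs; rewrite inE => /orP [/eqP ->|/IHs]; [left|right]. Qed.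

Lemma all_In_map_enum (I : finType) T (F : I -> T) (P : T -> Prop) :
  (forall t, List.In t (map F (enum I)) -> P t) <-> forall p, P (F p).
Proof.
split=> [hP p|hP t /List.in_map_iff [p [<- _]]]; last exact: hP.
by apply/hP/List.in_map/mem_In; rewrite mem_enum.
Qed.

Section Terms.
Variable A : nzRingType.

Definition tsum (ts : seq (term A)) : term A := foldr (@TAdd A) (TConst 0) ts.

Definition inverse_eq n p (X : 'I_n -> 'I_p -> nat) (Y : 'I_p -> 'I_n -> nat)
    (i i' : 'I_n) : term A :=
  TAdd (tsum [seq TMul (TVar (X i j)) (TVar (Y j i')) | j <- enum 'I_p])
       (TNeg (TConst (i == i')%:R)).

Lemma evalA_tsum (s : nat -> A) ts :
  evalA s (tsum ts) = \sum_(t <- ts) evalA s t.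
Proof. by elim: ts => [|t ts IHts]; rewrite ?big_nil ?big_cons //= IHts. Qed.

Lemma evalEnd_tsum (M : lmodType A^c) (s : nat -> M -> M) ts x :
  evalEnd s (tsum ts) x = \sum_(t <- ts) evalEnd s t x.
Proof.
elim: ts => [|t ts IHts]; rewrite ?big_nil ?big_cons //= ?IHts //.
exact: scale0r.
Qed.

Lemma evalA_inverse_eq (s : nat -> A) n p X Y (i i' : 'I_n) :
  evalA s (@inverse_eq n p X Y i i') = \sum_j s (X i j) * s (Y j i') - (i == i')%:R.
Proof. by rewrite /= evalA_tsum big_map big_enum. Qed.

Lemma evalEnd_inverse_eq (M : lmodType A^c) (s : nat -> M -> M) n p X Y
    (i i' : 'I_n) x :
  evalEnd s (@inverse_eq n p X Y i i') x =
    \sum_j s (Y j i') (s (X i j) x) - if i == i' then x else 0.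
Proof.
rewrite /= evalEnd_tsum big_map big_enum /=.
by case: eqP; rewrite ?scale1r ?scale0r.
Qed.

End Terms.

Section InverseSystem.
Variables (A : nzRingType) (m k : nat).

Definition inverse_var := (('I_m * 'I_k) + ('I_k * 'I_m))%type.
Definition fvar (i : 'I_m) (j : 'I_k) : nat := pickle (inl (i, j) : inverse_var).
Definition gvar (j : 'I_k) (i : 'I_m) : nat := pickle (inr (j, i) : inverse_var).

Definition inverse_eqn (e : ('I_m * 'I_m) + ('I_k * 'I_k)) : term A :=
  match e with
  | inl (i, i') => inverse_eq A fvar gvar i i'
  | inr (j, j') => inverse_eq A gvar fvar j j'
  end.

Definition inverse_sys : seq (term A) :=
  map inverse_eqn (enum {: ('I_m * 'I_m) + ('I_k * 'I_k)}).

Lemma inverse_sys_free_iso (s : nat -> A) :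
  (forall t, List.In t inverse_sys -> evalA s t = 0) -> free_iso A m k.
Proof.
move/all_In_map_enum => sol.
exists (\matrix_(i, j) s (fvar i j)), (\matrix_(j, i) s (gvar j i)).
split; apply/matrixP => a a'; rewrite !mxE.
- have /eqP := sol (inl (a, a')); rewrite evalA_inverse_eq subr_eq0 => /eqP <-.
  by apply: eq_bigr => j _; rewrite !mxE.
- have /eqP := sol (inr (a, a')); rewrite evalA_inverse_eq subr_eq0 => /eqP <-.
  by apply: eq_bigr => i _; rewrite !mxE.
Qed.

Variable M : lmodType A^c.

Definition end_assignment (f : power M m -> power M k) (g : power M k -> power M m)
    (n : nat) : M -> M :=
  match @unpickle inverse_var n with
  | Some (inl (i, j)) => fun x => f (inj_summand i x) j
  | Some (inr (j, i)) => fun x => g (inj_summand j x) i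
  | None => fun _ => 0
  end.

Lemma inverse_sys_End (f : power M m -> power M k) g :
  additive_map f -> cancel f g -> cancel g f ->
  exists s : nat -> M -> M, (forall n, additive_map (s n)) /\
    forall t, List.In t inverse_sys -> forall x, evalEnd s t x = 0.
Proof.
move=> f_add fK gK; have g_add := additive_map_inverse f_add fK gK.
exists (end_assignment f g); split.
  move=> n x y; rewrite /end_assignment.
  case: unpickle => [[[i j]|[j i]]|]; rewrite ?addr0 // inj_summand_additive.
    by rewrite f_add ffunE.
  by rewrite g_add ffunE.
apply/all_In_map_enum => [[[i i']|[j j']]] x; rewrite evalEnd_inverse_eq.
  under eq_bigr do rewrite /end_assignment /fvar /gvar !pickleK.
  rewrite -sum_ffunE (sum_summands_cancel g_add fK) ffunE eq_sym.
  by case: eqP; rewrite subrr.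
under eq_bigr do rewrite /end_assignment /fvar /gvar !pickleK.
rewrite -sum_ffunE (sum_summands_cancel f_add gK) ffunE eq_sym.
by case: eqP; rewrite subrr.
Qed.

End InverseSystem.

Lemma alg_closed_free_iso (A : nzRingType) (M : lmodType A^c) m k :
  alg_closed_in_End M -> group_iso (power M m) (power M k) -> free_iso A m k.
Proof.
move=> closed [f [f_add [g fK gK]]].
have [s sol] := closed _ (inverse_sys_End f_add fK gK).
exact: inverse_sys_free_iso sol.
Qed.

Lemma corner_free_iso_eq (A : nzRingType) r (G : lmodType A^c) l n :
  corner_group r G -> (0 < l)%N -> (0 < n)%N -> (l <= r)%N -> (n <= r)%N ->
  free_iso A l n -> l = n.
Proof.
move=> [_ [_ [_ [_ distinct]]]] l_gt0 n_gt0 le_lr le_nr iso_ln.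
case: (ltngtP l n) => // [lt_ln|lt_nl].
  by case: (distinct l n l_gt0 lt_ln le_nr); apply: free_iso_group_iso.
by case: (distinct n l n_gt0 lt_nl le_lr); apply/free_iso_group_iso/free_iso_sym.
Qed.

Lemma modn_rep_pos r m :
  (0 < r)%N -> (0 < m)%N -> exists2 m', (0 < m' <= r)%N & m' = m %[mod r].
Proof.
move=> r_gt0 m_gt0; exists (m.-1 %% r).+1; first by rewrite ltn_pmod.
by rewrite -addn1 modnDml addn1 prednK.
Qed.

(* The construction of M enters only through the hypothesis that A is
   algebraically closed in End(M). *)
Theorem proposition3p1
  (r : nat) (hr : (0 < r)%N)
  (A : nzRingType) (rho sigma : 'I_r.+1 -> A) (hA : is_Ar rho sigma)
  (G : lmodType A^c) (hG : corner_group r G)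
  (H : lmodType A^c) (B : H -> Prop) (Bn : nat -> H -> Prop)
  (b : nat -> nat -> H) (hBH : BH_data G B Bn b)
  (d : Order.disp_t) (O : orderType d) (hO : @is_omega1 d O)
  (E : O -> Prop) (hElim : forall a, E a -> limit_ord a)
  (hEstat : stationary E)
  (eta : O -> nat -> O) (heta : tree_ladder E eta)
  (M : lmodType A^c) (Mb : O -> M -> Prop) (x : O -> nat -> M)
  (theta : O -> H -> M) (hM : M_construction B b E eta Mb x theta) :
  alg_closed_in_End M ->
  forall m k : nat, (0 < m)%N -> (0 < k)%N ->
    (group_iso (power M m) (power M k) <-> m = k %[mod r]).
Proof.
move=> closed m k m_gt0 k_gt0; have rel_A := hA.1.
split=> [iso_mk|emk]; last exact/free_iso_group_iso/(Ar_free_iso_mod rel_A).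
have [m' /andP [m'_gt0 le_m'r] em'] := modn_rep_pos hr m_gt0.
have [k' /andP [k'_gt0 le_k'r] ek'] := modn_rep_pos hr k_gt0.
suff em'k' : m' = k' by rewrite -em' -ek' em'k'.
apply: (corner_free_iso_eq hG) => //.
apply: free_iso_trans (Ar_free_iso_mod rel_A m'_gt0 m_gt0 em') _.
apply: free_iso_trans (alg_closed_free_iso closed iso_mk) _.
exact: (Ar_free_iso_mod rel_A k_gt0 k'_gt0 (esym ek')).
Qed.
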